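(* Every Eulerian map is edge-wise Eulerian: if $X$ is a Peano continuum and $g:S^1\to X$ is a continuous surjection such that $g(A)\neq X$ for every closed $A\subsetneq S^1$, then $g^{-1}(x)$ is a singleton for every point $x$ lying in a free arc of $X$.
   Context: A Peano continuum is a compact, connected, locally connected metrizable space. A free arc of $X$ is an inclusion-maximal open subset of $X$ homeomorphic to $(0,1)$. *)

From Stdlib Require Import Reals Lra List.
Open Scope R_scope.

Definition is_metric {T : Type} (d : T -> T -> R) : Prop :=
  (forall x y, 0 <= d x y) /\
  (forall x y, d x y = 0 <-> x = y) /\
  (forall x y, d x y = d y x) /\
  (forall x y z, d x z <= d x y + d y z).

Definition mopen {T : Type} (d : T -> T -> R) (U : T -> Prop) : Prop :=
  forall x, U x -> exists eps, 0 < eps /\ forall y, d x y < eps -> U y.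

Definition mclosed {T : Type} (d : T -> T -> R) (A : T -> Prop) : Prop :=
  mopen d (fun x => ~ A x).

Definition mcompact_space {T : Type} (d : T -> T -> R) : Prop :=
  forall (I : Type) (U : I -> T -> Prop),
    (forall i, mopen d (U i)) -> (forall x, exists i, U i x) ->
    exists l : list I, forall x, exists i, In i l /\ U i x.

Definition mconnected_set {T : Type} (d : T -> T -> R) (A : T -> Prop) : Prop :=
  forall U V : T -> Prop, mopen d U -> mopen d V ->
    (forall x, A x -> U x \/ V x) ->
    (forall x, A x -> U x -> V x -> False) ->
    (exists x, A x /\ U x) -> (exists x, A x /\ V x) -> False.

Definition connected_space {T : Type} (d : T -> T -> R) : Prop :=
  mconnected_set d (fun _ => True).

Definition locally_connected {T : Type} (d : T -> T -> R) : Prop :=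
  forall (x : T) (U : T -> Prop), mopen d U -> U x ->
    exists V, mopen d V /\ mconnected_set d V /\ V x /\ (forall y, V y -> U y).

Definition peano_continuum {T : Type} (d : T -> T -> R) : Prop :=
  is_metric d /\ mcompact_space d /\ connected_space d /\ locally_connected d.

Definition mcontinuous {S T : Type} (dS : S -> S -> R) (dT : T -> T -> R)
  (f : S -> T) : Prop :=
  forall x eps, 0 < eps -> exists delta, 0 < delta /\
    forall y, dS x y < delta -> dT (f x) (f y) < eps.

Definition S1 : Type := { p : R * R | fst p ^ 2 + snd p ^ 2 = 1 }.

Definition dS1 (p q : S1) : R :=
  sqrt ((fst (proj1_sig p) - fst (proj1_sig q)) ^ 2 +
        (snd (proj1_sig p) - snd (proj1_sig q)) ^ 2).

Definition homeomorphic_to_open_interval {T : Type} (d : T -> T -> R)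
  (U : T -> Prop) : Prop :=
  exists h : R -> T,
    (forall t, 0 < t < 1 -> U (h t)) /\
    (forall x, U x -> exists t, 0 < t < 1 /\ h t = x) /\
    (forall s t, 0 < s < 1 -> 0 < t < 1 -> h s = h t -> s = t) /\
    (forall t eps, 0 < t < 1 -> 0 < eps -> exists delta, 0 < delta /\
       forall s, 0 < s < 1 -> Rabs (s - t) < delta -> d (h t) (h s) < eps) /\
    (forall t eps, 0 < t < 1 -> 0 < eps -> exists delta, 0 < delta /\
       forall s, 0 < s < 1 -> d (h t) (h s) < delta -> Rabs (s - t) < eps).

Definition free_arc {T : Type} (d : T -> T -> R) (U : T -> Prop) : Prop :=
  mopen d U /\ homeomorphic_to_open_interval d U /\
  forall V, mopen d V -> homeomorphic_to_open_interval d V ->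
    (forall x, U x -> V x) -> (forall x, V x -> U x).

From Stdlib Require Import Reals Rgeom Lra Psatz ProofIrrelevance Classical ClassicalEpsilon.
Open Scope R_scope.

(* Let x lie in a free arc U, parametrised by a
   homeomorphism h : (0,1) -> U, and suppose g z = g w = x with z <> w.
   On g^-1(U) the coordinate  coord = h^-1 o g  is a continuous real function.
   - The Eulerian hypothesis yields "private points": every open ball of S^1
     contains a point whose g-value is attained nowhere outside the ball.
   - A continuous real function taking equal values at both ends of an
     interval has a fold: a point q such that every value taken near q is
     also taken at parameters far from q.  Private points forbid folds, so
     coord is injective along short arcs of S^1 inside g^-1(U).
   - A continuous injective function on an interval is open at interior
     points; hence coord maps every small ball around w onto a neighbourhood
     of coord w.
   - A private point of a small ball around z has its coordinate close to
     coord z = coord w, so its g-value is attained near w, outside the ball. *)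

Lemma S1_eq (p q : S1) : proj1_sig p = proj1_sig q -> p = q.
Proof.
  destruct p as [p Hp], q as [q Hq]; simpl; intros ->.
  f_equal; apply proof_irrelevance.
Qed.

Lemma dS1_euc (p q : S1) :
  dS1 p q = dist_euc (fst (proj1_sig p)) (snd (proj1_sig p))
                     (fst (proj1_sig q)) (snd (proj1_sig q)).
Proof. unfold dS1, dist_euc. now rewrite !Rsqr_pow2. Qed.

Lemma dS1_sym (p q : S1) : dS1 p q = dS1 q p.
Proof. rewrite !dS1_euc. apply distance_symm. Qed.

Lemma dS1_tri (p q r : S1) : dS1 p r <= dS1 p q + dS1 q r.
Proof. rewrite !dS1_euc. apply triangle. Qed.

Lemma dS1_eq0 (p q : S1) : dS1 p q = 0 -> p = q.
Proof.
  unfold dS1; intros H0.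
  destruct p as [[a b] Hp], q as [[c e] Hq]; cbn [fst snd proj1_sig] in *.
  pose proof (pow2_ge_0 (a - c)). pose proof (pow2_ge_0 (b - e)).
  assert (Hsq : (a - c) ^ 2 + (b - e) ^ 2 = 0) by (apply sqrt_eq_0; [lra | exact H0]).
  apply S1_eq; cbn; f_equal; apply Rminus_diag_uniq, Rsqr_0_uniq; rewrite Rsqr_pow2; lra.
Qed.

Lemma cos_sin_sq (t : R) : cos t ^ 2 + sin t ^ 2 = 1.
Proof. pose proof (sin2_cos2 t) as H. unfold Rsqr in H. lra. Qed.

Definition rot (z : S1) (t : R) : S1.
Proof.
  refine (exist _ (fst (proj1_sig z) * cos t - snd (proj1_sig z) * sin t,
                   fst (proj1_sig z) * sin t + snd (proj1_sig z) * cos t) _).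
  destruct z as [[a b] H]; cbn [fst snd proj1_sig] in *.
  replace ((a * cos t - b * sin t) ^ 2 + (a * sin t + b * cos t) ^ 2)
    with ((a ^ 2 + b ^ 2) * (cos t ^ 2 + sin t ^ 2)) by ring.
  rewrite H, cos_sin_sq. ring.
Defined.

Lemma rot0 (z : S1) : rot z 0 = z.
Proof.
  apply S1_eq. destruct z as [[a b] H]; unfold rot; cbn [fst snd proj1_sig].
  rewrite cos_0, sin_0. f_equal; ring.
Qed.

Lemma rot_rot (z : S1) (q t : R) : rot (rot z q) t = rot z (q + t).
Proof.
  apply S1_eq. destruct z as [[a b] H]; unfold rot; cbn [fst snd proj1_sig].
  rewrite cos_plus, sin_plus. f_equal; ring.
Qed.

Definition chord (t : R) : R := sqrt (2 - 2 * cos t).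

Lemma dS1_rot (z : S1) (t t' : R) : dS1 (rot z t) (rot z t') = chord (t - t').
Proof.
  unfold dS1, chord, rot. destruct z as [[a b] H]; cbn [fst snd proj1_sig] in *.
  f_equal. rewrite cos_minus.
  replace ((a * cos t - b * sin t - (a * cos t' - b * sin t')) ^ 2 +
           (a * sin t + b * cos t - (a * sin t' + b * cos t')) ^ 2)
    with ((a ^ 2 + b ^ 2) * ((cos t ^ 2 + sin t ^ 2) + (cos t' ^ 2 + sin t' ^ 2)
          - 2 * (cos t * cos t' + sin t * sin t'))) by ring.
  rewrite H, !cos_sin_sq. ring.
Qed.

Lemma dS1_center_rot (c : S1) (t : R) : dS1 c (rot c t) = chord t.
Proof.
  rewrite <- (rot0 c) at 1. rewrite dS1_rot.
  unfold chord. now rewrite Rminus_0_l, cos_neg.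
Qed.

Lemma sin_abs_le (x : R) : Rabs (sin x) <= Rabs x.
Proof.
  pose proof (SIN_bound x). pose proof PI2_1.
  destruct (Rle_lt_dec 1 (Rabs x)) as [h|h].
  { apply Rle_trans with 1; auto. apply Rabs_le; lra. }
  destruct (Rtotal_order x 0) as [hx|[hx|hx]].
  - rewrite Rabs_left in h by lra.
    assert (sin (- x) < - x) by (apply sin_lt_x; lra).
    assert (0 < sin (- x)) by (apply sin_gt_0; lra).
    rewrite sin_neg in *. rewrite !Rabs_left; lra.
  - subst. rewrite sin_0. lra.
  - rewrite Rabs_right in h by lra.
    assert (sin x < x) by (apply sin_lt_x; lra).
    assert (0 < sin x) by (apply sin_gt_0; lra).
    rewrite !Rabs_right; lra.
Qed.

Lemma chord_le (t : R) : chord t <= Rabs t.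
Proof.
  unfold chord. replace t with (2 * (t / 2)) at 1 by field.
  rewrite cos_2a_sin, <- sqrt_Rsqr_abs. apply sqrt_le_1_alt.
  assert (E : Rsqr (sin (t / 2)) <= Rsqr (t / 2)).
  { rewrite (Rsqr_abs (sin _)), (Rsqr_abs (t / 2)).
    apply Rsqr_incr_1; [apply sin_abs_le | apply Rabs_pos | apply Rabs_pos]. }
  unfold Rsqr in *. nra.
Qed.

Lemma chord_mono (a t : R) : 0 <= a <= Rabs t -> Rabs t <= PI -> chord a <= chord t.
Proof.
  intros Ha Ht. unfold chord. apply sqrt_le_1_alt.
  assert (Hcos : cos (Rabs t) = cos t)
    by (unfold Rabs; destruct Rcase_abs; [apply cos_neg | reflexivity]).
  assert (cos (Rabs t) <= cos a); [| lra].
  destruct (Req_dec a (Rabs t)) as [<-|hne]; [lra |].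
  left. apply cos_decreasing_1; lra.
Qed.

Lemma chord_pos (t : R) : 0 < t <= PI -> 0 < chord t.
Proof.
  intros Ht. apply sqrt_lt_R0.
  assert (cos t < cos 0) by (apply cos_decreasing_1; lra).
  rewrite cos_0 in *. lra.
Qed.

Lemma near_is_rotation (z w : S1) :
  dS1 z w < 1 -> exists t, - (PI / 2) < t < PI / 2 /\ w = rot z t.
Proof.
  intros Hd. destruct z as [[a b] Hz], w as [[x y] Hw].
  unfold dS1 in Hd; cbn [fst snd proj1_sig] in *.
  set (C := a * x + b * y). set (S := a * y - b * x).
  assert (HCS : C ^ 2 + S ^ 2 = 1).
  { unfold C, S.
    replace ((a * x + b * y) ^ 2 + (a * y - b * x) ^ 2)
      with ((a ^ 2 + b ^ 2) * (x ^ 2 + y ^ 2)) by ring.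
    rewrite Hz, Hw; ring. }
  replace ((a - x) ^ 2 + (b - y) ^ 2) with (2 - 2 * C) in Hd
    by (unfold C; nra).
  assert (HC : 1 / 2 < C).
  { rewrite <- sqrt_1 in Hd.
    destruct (Rle_lt_dec (2 - 2 * C) 0); [lra|].
    apply sqrt_lt_0_alt in Hd. lra. }
  assert (HS : -1 <= S <= 1) by nra.
  pose proof (asin_bound S) as Hb.
  assert (Hs : sin (asin S) = S) by (apply sin_asin; auto).
  assert (Hc : cos (asin S) = C).
  { rewrite cos_asin by auto. replace (1 - S²) with (C ^ 2) by (unfold Rsqr; lra).
    apply sqrt_pow2; lra. }
  exists (asin S). split.
  - split.
    + destruct (Req_dec (asin S) (- (PI / 2))) as [e|e]; [|lra].
      rewrite e, cos_neg, cos_PI2 in Hc. lra.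
    + destruct (Req_dec (asin S) (PI / 2)) as [e|e]; [|lra].
      rewrite e, cos_PI2 in Hc. lra.
  - apply S1_eq. unfold rot; cbn [fst snd proj1_sig]. rewrite Hs, Hc.
    unfold C, S. f_equal.
    + replace (a * (a * x + b * y) - b * (a * y - b * x)) with ((a ^ 2 + b ^ 2) * x) by ring.
      rewrite Hz; ring.
    + replace (a * (a * y - b * x) + b * (a * x + b * y)) with ((a ^ 2 + b ^ 2) * y) by ring.
      rewrite Hz; ring.
Qed.

Lemma ball_is_arc (c y : S1) (eta : R) :
  0 < eta < PI / 3 -> dS1 c y < chord eta -> exists th, Rabs th < eta /\ y = rot c th.
Proof.
  intros Heta Hy.
  assert (Hlt1 : chord eta < 1).
  { unfold chord. rewrite <- sqrt_1. apply sqrt_lt_1_alt.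
    assert (cos (PI / 3) < cos eta) by (apply cos_decreasing_1; lra).
    rewrite cos_PI3 in *. pose proof (COS_bound eta). lra. }
  destruct (near_is_rotation c y ltac:(lra)) as [th [Hth ->]].
  exists th; split; [| reflexivity].
  rewrite dS1_center_rot in Hy.
  destruct (Rlt_le_dec (Rabs th) eta) as [h|h]; [exact h|].
  assert (Rabs th <= PI) by (apply Rabs_le; lra).
  pose proof (chord_mono eta th ltac:(lra) ltac:(lra)). lra.
Qed.

Lemma far_arc_outside (c : S1) (eta t : R) :
  0 <= eta <= Rabs t -> Rabs t <= PI -> ~ dS1 c (rot c t) < chord eta.
Proof.
  intros Ht Hpi. rewrite dS1_center_rot.
  pose proof (chord_mono eta t Ht Hpi). lra.
Qed.

Lemma continuity_pt_eps (f : R -> R) (x eps : R) : continuity_pt f x -> 0 < eps ->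
  exists del, 0 < del /\ forall y, Rabs (y - x) < del -> Rabs (f y - f x) < eps.
Proof.
  intros H He. destruct (H eps He) as [del [Hdel Hy]]. exists del; split; auto.
  intros y Hyd. destruct (Req_dec y x) as [->|Hne].
  - rewrite Rminus_diag, Rabs_R0; auto.
  - apply (Hy y). split; [split; [exact I | auto] | exact Hyd].
Qed.

Lemma continuity_pt_from_eps (f : R -> R) (x : R) :
  (forall eps, 0 < eps -> exists del, 0 < del /\
     forall y, Rabs (y - x) < del -> Rabs (f y - f x) < eps) ->
  continuity_pt f x.
Proof.
  intros H eps He. destruct (H eps He) as [del [Hdel Hy]]. exists del; split; auto.
  intros y [_ Hyd]. apply Hy. exact Hyd.
Qed.

Lemma ivt_between (f : R -> R) (a b v : R) : a <= b ->
  (forall c, a <= c <= b -> continuity_pt f c) ->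
  (f a < v < f b \/ f b < v < f a) -> exists c, a <= c <= b /\ f c = v.
Proof.
  intros Hab Hc Hv.
  assert (a < b) by (destruct (Req_dec a b) as [<-|]; lra).
  destruct Hv as [Hv|Hv].
  - destruct (Ranalysis5.IVT_interv (fun x => f x - v) a b) as [c [Hc1 Hc2]];
      try lra; [| exists c; split; auto; lra].
    intros c Hc'. apply continuity_pt_minus; [auto | apply continuity_pt_const; now intros ? ?].
  - destruct (Ranalysis5.IVT_interv (fun x => v - f x) a b) as [c [Hc1 Hc2]];
      try lra; [| exists c; split; auto; lra].
    intros c Hc'. apply continuity_pt_minus; [apply continuity_pt_const; now intros ? ? | auto].
Qed.

Definition has_fold (f : R -> R) (s u : R) : Prop :=
  exists q eta, 0 < eta /\ s < q - eta /\ q + eta < u /\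
    forall t, q - eta < t < q + eta ->
      exists t', s <= t' <= u /\ eta <= Rabs (t' - q) /\ f t' = f t.

(* If f s = f u and f p > f s, a point of (s, p) where f takes the value
   (f s + f p) / 2 is a fold: nearby values are taken again on [p, u]. *)
Lemma fold_of_max (f : R -> R) (s u : R) : s < u ->
  (forall c, s <= c <= u -> continuity_pt f c) ->
  f s = f u -> (exists p, s <= p <= u /\ f s < f p) -> has_fold f s u.
Proof.
  intros Hsu Hc Hfe [p [Hp Hfp]].
  destruct (ivt_between f s p ((f s + f p) / 2)) as [q [Hq Hfq]]; try lra.
  { intros c Hc'; apply Hc; lra. }
  assert (Hqs : s < q) by (destruct (Req_dec q s); [subst; lra | lra]).
  assert (Hqp : q < p) by (destruct (Req_dec q p); [subst; lra | lra]).
  destruct (continuity_pt_eps f q ((f p - f s) / 2)) as [del [Hdel Hnear]];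
    [apply Hc; lra | lra |].
  set (eta := Rmin del (Rmin ((q - s) / 2) ((p - q) / 2))).
  assert (He1 : eta <= del) by apply Rmin_l.
  assert (He2 : eta <= (q - s) / 2) by (eapply Rle_trans; [apply Rmin_r | apply Rmin_l]).
  assert (He3 : eta <= (p - q) / 2) by (eapply Rle_trans; [apply Rmin_r | apply Rmin_r]).
  assert (He0 : 0 < eta) by (unfold eta; repeat apply Rmin_pos; lra).
  exists q, eta. split; [lra | split; [lra | split; [lra |]]].
  intros t Ht.
  assert (Hft : Rabs (f t - f q) < (f p - f s) / 2) by (apply Hnear; apply Rabs_def1; lra).
  apply Rabs_def2 in Hft.
  destruct (ivt_between f p u (f t)) as [t' [Ht' Hft']]; try lra.
  { intros c Hc'; apply Hc; lra. }
  exists t'; split; [lra | split; auto].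
  rewrite Rabs_right; lra.
Qed.

Lemma fold_point (f : R -> R) (s u : R) : s < u ->
  (forall c, s <= c <= u -> continuity_pt f c) -> f s = f u -> has_fold f s u.
Proof.
  intros Hsu Hc Hfe.
  destruct (classic (exists p, s <= p <= u /\ f s < f p)) as [Hup|Hnup].
  { apply fold_of_max; auto. }
  destruct (classic (exists p, s <= p <= u /\ f p < f s)) as [Hdn|Hndn].
  - (* a minimum of f is a maximum of -f *)
    destruct (fold_of_max (fun x => - f x) s u) as [q [eta [G1 [G2 [G3 G4]]]]]; auto.
    + intros c Hc'. apply continuity_pt_opp. auto.
    + lra.
    + destruct Hdn as [p [Hp Hfp]]. exists p; split; auto; lra.
    + exists q, eta. repeat split; auto. intros t Ht.
      destruct (G4 t Ht) as [t' [A [B C]]]. exists t'; repeat split; auto; lra.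
  - (* f is constant: the midpoint is a fold *)
    assert (Hconst : forall p, s <= p <= u -> f p = f s).
    { intros p Hp. destruct (Rtotal_order (f p) (f s)) as [Hl|[He|Hg]]; auto.
      - exfalso; apply Hndn; eauto.
      - exfalso; apply Hnup; eauto. }
    exists ((s + u) / 2), ((u - s) / 4). split; [lra | split; [lra | split; [lra |]]].
    intros t Ht. exists s. split; [lra | split].
    + rewrite Rabs_left; lra.
    + rewrite (Hconst t); lra.
Qed.

Lemma injective_value_between (f : R -> R) (a b c : R) : a < c < b ->
  (forall x, a <= x <= b -> continuity_pt f x) ->
  (forall x y, a <= x <= b -> a <= y <= b -> x < y -> f x <> f y) ->
  f a < f c < f b \/ f b < f c < f a.
Proof.
  intros Hc Hcont Hinj.
  assert (N1 : f a <> f c) by (apply Hinj; lra).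
  assert (N2 : f c <> f b) by (apply Hinj; lra).
  assert (N3 : f a <> f b) by (apply Hinj; lra).
  (* f b cannot be a value of f on [a, c], nor f a a value on [c, b] *)
  assert (L : ~ (f a < f b < f c \/ f c < f b < f a)).
  { intros Hv. destruct (ivt_between f a c (f b)) as [t [Ht Hft]]; try lra.
    - intros; apply Hcont; lra.
    - apply (Hinj t b); lra. }
  assert (R' : ~ (f c < f a < f b \/ f b < f a < f c)).
  { intros Hv. destruct (ivt_between f c b (f a)) as [t [Ht Hft]]; try lra.
    - intros; apply Hcont; lra.
    - apply (Hinj a t); lra. }
  lra.
Qed.

Lemma injective_open_at (f : R -> R) (a b c : R) : a < c < b ->
  (forall x, a <= x <= b -> continuity_pt f x) ->
  (forall x y, a <= x <= b -> a <= y <= b -> x < y -> f x <> f y) ->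
  exists eps, 0 < eps /\
    forall v, Rabs (v - f c) < eps -> exists t, a <= t <= b /\ f t = v.
Proof.
  intros Hc Hcont Hinj.
  pose proof (injective_value_between f a b c Hc Hcont Hinj) as Hbetween.
  exists (Rmin (Rabs (f a - f c)) (Rabs (f b - f c))). split.
  { apply Rmin_pos; apply Rabs_pos_lt; lra. }
  intros v Hv.
  pose proof (Rmin_l (Rabs (f a - f c)) (Rabs (f b - f c))).
  pose proof (Rmin_r (Rabs (f a - f c)) (Rabs (f b - f c))).
  apply Rabs_def2 in Hv.
  apply ivt_between; [lra | intros; apply Hcont; lra |].
  destruct Hbetween as [Ho|Ho].
  - rewrite (Rabs_left (f a - f c)), (Rabs_right (f b - f c)) in * by lra. left; lra.
  - rewrite (Rabs_right (f a - f c)), (Rabs_left (f b - f c)) in * by lra. right; lra.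
Qed.

Definition private_point {X : Type} (g : S1 -> X) (c : S1) (r : R) (w0 : S1) : Prop :=
  dS1 c w0 < r /\ forall z, ~ dS1 c z < r -> g z <> g w0.

(* Applying the Eulerian property to the closed complement of a ball. *)
Lemma eulerian_private_point (X : Type) (g : S1 -> X) :
  (forall x : X, exists z : S1, g z = x) ->
  (forall A : S1 -> Prop, mclosed dS1 A -> (exists z, ~ A z) ->
     exists x : X, forall z, A z -> g z <> x) ->
  forall c r, 0 < r -> exists w0, private_point g c r w0.
Proof.
  intros Hsurj Heul c r Hr.
  destruct (Heul (fun w => ~ dS1 c w < r)) as [x' Hx'].
  - intros w Hw. apply NNPP in Hw. exists (r - dS1 c w). split; [lra |].
    intros y Hy HA. apply HA. pose proof (dS1_tri c w y). lra.
  - exists c. unfold dS1. replace (_ + _) with 0 by ring. rewrite sqrt_0. lra.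
  - destruct (Hsurj x') as [w0 Hw0]. exists w0. split.
    + apply NNPP. intro HA. exact (Hx' w0 HA Hw0).
    + intros z Hz. rewrite Hw0. auto.
Qed.

Section Chart.

Variables (X : Type) (d : X -> X -> R) (g : S1 -> X) (U : X -> Prop) (h : R -> X).

Hypothesis g_cont : mcontinuous dS1 d g.
Hypothesis U_open : mopen d U.
Hypothesis h_onto : forall x, U x -> exists t, 0 < t < 1 /\ h t = x.
Hypothesis h_inj : forall s t, 0 < s < 1 -> 0 < t < 1 -> h s = h t -> s = t.
Hypothesis h_inv_cont : forall t eps, 0 < t < 1 -> 0 < eps -> exists delta, 0 < delta /\
  forall s, 0 < s < 1 -> d (h t) (h s) < delta -> Rabs (s - t) < eps.
Hypothesis g_private : forall c r, 0 < r -> exists w0, private_point g c r w0.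

Definition coord (y : S1) : R :=
  epsilon (inhabits 0) (fun t => 0 < t < 1 /\ h t = g y).

Lemma coord_spec (y : S1) : U (g y) -> 0 < coord y < 1 /\ h (coord y) = g y.
Proof.
  intros Hy. unfold coord. apply epsilon_spec.
  destruct (h_onto _ Hy) as [t Ht]. eauto.
Qed.

Lemma coord_eq_g (y y' : S1) : U (g y) -> U (g y') -> coord y = coord y' -> g y = g y'.
Proof.
  intros Hy Hy' E. rewrite <- (proj2 (coord_spec y Hy)), <- (proj2 (coord_spec y' Hy')).
  now rewrite E.
Qed.

Lemma g_eq_coord (y y' : S1) : U (g y) -> g y = g y' -> coord y = coord y'.
Proof.
  intros Hy E. assert (Hy' : U (g y')) by now rewrite <- E.
  destruct (coord_spec y Hy) as [A1 A2], (coord_spec y' Hy') as [B1 B2].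
  apply h_inj; auto. now rewrite A2, B2.
Qed.

Lemma preimage_open (y : S1) : U (g y) ->
  exists rho, 0 < rho /\ forall y', dS1 y y' < rho -> U (g y').
Proof.
  intros Hy. destruct (U_open _ Hy) as [r [Hr HUr]].
  destruct (g_cont y r Hr) as [rho [Hrho Hball]]. eauto.
Qed.

Lemma coord_continuous (y : S1) (eps : R) : U (g y) -> 0 < eps ->
  exists del, 0 < del /\
    forall y', dS1 y y' < del -> U (g y') /\ Rabs (coord y' - coord y) < eps.
Proof.
  intros Hy He. destruct (preimage_open y Hy) as [rho [Hrho HUrho]].
  destruct (coord_spec y Hy) as [Hp1 Hp2].
  destruct (h_inv_cont (coord y) eps Hp1 He) as [dh [Hdh Hinv]].
  destruct (g_cont y dh Hdh) as [del [Hdel Hball]].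
  exists (Rmin rho del); split; [apply Rmin_pos; auto |].
  intros y' Hy'. pose proof (Rmin_l rho del). pose proof (Rmin_r rho del).
  assert (HU' : U (g y')) by (apply HUrho; lra).
  destruct (coord_spec y' HU') as [Hq1 Hq2].
  split; auto. apply Hinv; auto. rewrite Hp2, Hq2. apply Hball. lra.
Qed.

Lemma coord_arc_continuous (c : S1) (t : R) : U (g (rot c t)) ->
  continuity_pt (fun s => coord (rot c s)) t.
Proof.
  intros Ht. apply continuity_pt_from_eps. intros eps He.
  destruct (coord_continuous _ eps Ht He) as [del [Hdel Hnear]].
  exists del; split; auto. intros s Hs. apply Hnear.
  rewrite dS1_rot. eapply Rle_lt_trans; [apply chord_le |].
  now rewrite Rabs_minus_sym.
Qed.

(* Private points forbid folds: coord is injective along arcs of length at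
   most PI inside g^-1(U). *)
Lemma coord_arc_injective (c : S1) (s u : R) : s < u -> u - s <= PI ->
  (forall t, s <= t <= u -> U (g (rot c t))) -> coord (rot c s) <> coord (rot c u).
Proof.
  intros Hsu Hpi HU Heq. pose proof PI_RGT_0.
  destruct (fold_point (fun t => coord (rot c t)) s u) as [q [eta [He0 [Hs [Hu Hfold]]]]];
    auto.
  { intros t Ht. apply coord_arc_continuous, HU; lra. }
  set (eta' := Rmin eta (PI / 4)).
  assert (E1 : eta' <= eta) by apply Rmin_l.
  assert (E2 : eta' <= PI / 4) by apply Rmin_r.
  assert (E0 : 0 < eta') by (apply Rmin_pos; lra).
  destruct (g_private (rot c q) (chord eta')) as [w0 [Hw0 Hpriv]];
    [apply chord_pos; lra |].
  destruct (ball_is_arc (rot c q) w0 eta') as [th [Hth ->]]; [lra | exact Hw0 |].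
  apply Rabs_def2 in Hth.
  (* the value at q + th is also taken at t', far from q *)
  destruct (Hfold (q + th)) as [t' [Ht' [Hfar Heqt]]]; [lra |].
  apply (Hpriv (rot c t')).
  - replace t' with (q + (t' - q)) by ring. rewrite <- rot_rot.
    apply far_arc_outside; [lra | apply Rabs_le; lra].
  - rewrite rot_rot. apply coord_eq_g; [apply HU; lra | apply HU; lra | exact Heqt].
Qed.

Lemma coord_locally_open (w : S1) (r : R) : U (g w) -> 0 < r ->
  exists eps, 0 < eps /\ forall v, Rabs (v - coord w) < eps ->
    exists y, dS1 w y < r /\ U (g y) /\ coord y = v.
Proof.
  intros Hw Hr. pose proof PI_RGT_0.
  destruct (preimage_open w Hw) as [rho [Hrho HUrho]].
  set (del := Rmin (Rmin rho r / 2) (PI / 2)).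
  assert (D1 : del <= Rmin rho r / 2) by apply Rmin_l.
  assert (D2 : del <= PI / 2) by apply Rmin_r.
  pose proof (Rmin_l rho r). pose proof (Rmin_r rho r).
  assert (D0 : 0 < del) by (apply Rmin_pos; [pose proof (Rmin_pos rho r Hrho Hr); lra | lra]).
  assert (Hclose : forall t, - del <= t <= del -> dS1 w (rot w t) < Rmin rho r).
  { intros t Ht. rewrite dS1_center_rot.
    assert (Rabs t <= del) by (apply Rabs_le; lra). pose proof (chord_le t). lra. }
  assert (Harc : forall t, - del <= t <= del -> U (g (rot w t))).
  { intros t Ht. apply HUrho. pose proof (Hclose t Ht). lra. }
  destruct (injective_open_at (fun t => coord (rot w t)) (- del) del 0)
    as [eps [Heps Hcov]]; [lra | | |].
  - intros t Ht. apply coord_arc_continuous, Harc; auto.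
  - intros a b Ha Hb Hab. apply coord_arc_injective; [lra | lra |].
    intros t Ht; apply Harc; lra.
  - rewrite rot0 in Hcov. exists eps; split; auto. intros v Hv.
    destruct (Hcov v Hv) as [t [Ht Hvt]].
    exists (rot w t). pose proof (Hclose t Ht). repeat split; auto; lra.
Qed.

Lemma fibre_singleton (z w : S1) : U (g z) -> g z = g w -> z = w.
Proof.
  intros Hz Hzw. apply NNPP; intro Hne.
  assert (HD : 0 < dS1 z w).
  { destruct (Rle_lt_or_eq_dec 0 (dS1 z w) (sqrt_pos _)) as [H|H]; [exact H |].
    exfalso. exact (Hne (dS1_eq0 z w (eq_sym H))). }
  set (D := dS1 z w) in *.
  assert (Hw : U (g w)) by now rewrite <- Hzw.
  destruct (coord_locally_open w (D / 2) Hw ltac:(lra)) as [eps [Heps Hopen]].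
  destruct (coord_continuous z eps Hz Heps) as [dz [Hdz Hnear]].
  destruct (g_private z (Rmin dz (D / 2))) as [w0 [Hw0 Hpriv]];
    [apply Rmin_pos; lra |].
  pose proof (Rmin_l dz (D / 2)). pose proof (Rmin_r dz (D / 2)).
  destruct (Hnear w0 ltac:(lra)) as [HU0 Hcoord0].
  rewrite (g_eq_coord z w Hz Hzw) in Hcoord0.
  (* the g-value of w0 is taken at a point y near w, hence far from z *)
  destruct (Hopen (coord w0) Hcoord0) as [y [Hy [HUy Hcy]]].
  apply (Hpriv y).
  - pose proof (dS1_tri z y w). rewrite (dS1_sym y w) in *. unfold D in *. lra.
  - now apply coord_eq_g.
Qed.

End Chart.

Theorem lemma2p1 (X : Type) (d : X -> X -> R) (g : S1 -> X) :
  peano_continuum d ->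
  mcontinuous dS1 d g ->
  (forall x : X, exists z : S1, g z = x) ->
  (forall A : S1 -> Prop, mclosed dS1 A -> (exists z, ~ A z) ->
     exists x : X, forall z, A z -> g z <> x) ->
  forall x : X, (exists U, free_arc d U /\ U x) ->
    exists z : S1, g z = x /\ forall w : S1, g w = x -> w = z.
Proof.
  intros _ Hg Hsurj Heul x [U [[HUo [[h [_ [Honto [Hinj [_ Hinv]]]]] _]] HUx]].
  pose proof (eulerian_private_point X g Hsurj Heul) as Hpriv.
  destruct (Hsurj x) as [z Hz]. exists z; split; auto.
  intros w Hw. symmetry.
  apply (fibre_singleton X d g U h Hg HUo Honto Hinj Hinv Hpriv); congruence.
Qed.
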